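(* Let $\mathbb S$ be the free semigroup action on the compact metric space $X$ generated by continuous maps $g_1,\dots,g_p$, with entropy function $h_{top}(\cdot)$. (i) If $K\subset X$ is a countable closed subset with a unique limit point $x_0$, then $h_{top}(x_0)\ge h_{top}(K,\mathbb S)$. (ii) For every $x_0\in X$ there exists a countable closed subset $K\subset X$ with $x_0\in K$ such that $x_0$ is the unique limit point of $K$ in $X$ and $h_{top}(x_0)=h_{top}(K,\mathbb S)$.
   Context: Setting: $(X,d)$ compact metric space, $g_1,\dots,g_p:X\to X$ continuous; $G_n^*$ the set of words $\underline g=g_{i_n}\cdots g_{i_1}$, $i_j\in\{1,\dots,p\}$; $d_{\underline g}(x,y)=\max_{0\le j\le n}d(g_{i_j}\cdots g_{i_1}x,g_{i_j}\cdots g_{i_1}y)$; $s(K,\underline g,\varepsilon)$ and $b_d(K,\underline g,\varepsilon)$ are the maximal cardinality of a $(\underline g,\varepsilon)$-separated subset of $K$, resp. the minimal cardinality of a $(\underline g,\varepsilon)$-spanning subset of $K$. $h_{top}(K,\mathbb S)=\lim_{\varepsilon\to0}\limsup_n\frac1n\log\big(p^{-n}\sum_{\underline g\in G_n^*}s(K,\underline g,\varepsilon)\big)$. Entropy function: $B_d(K,\mathbb S,\varepsilon)=\limsup_n\frac1n\log\big(p^{-n}\sum_{\underline g\in G_n^*}b_d(K,\underline g,\varepsilon)\big)$, $h_d(x,\varepsilon)=\inf\{B_d(K,\mathbb S,\varepsilon):K\text{ compact neighbourhood of }x\}$, $h_{top}(x)=\lim_{\varepsilon\to0^+}h_d(x,\varepsilon)$.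 *)

From HB Require Import structures.
From mathcomp Require Import all_boot all_order all_algebra.
From mathcomp Require Import all_classical all_reals all_analysis.
Set Implicit Arguments. Unset Strict Implicit. Unset Printing Implicit Defensive.
Import Order.TTheory GRing.Theory Num.Theory.
Local Open Scope classical_set_scope.
Local Open Scope ring_scope.

Section FreeSemigroupEntropy.
Variables (R : realType) (X : metricType R) (p : nat) (g : 'I_p -> X -> X).

(* A word of length n is w = (i_1, ..., i_n) : n.-tuple 'I_p, standing for
   g_{i_n} ... g_{i_1}.  [wpref w j x] = g_{i_j} ... g_{i_1} x (j = 0: x). *)
Definition wpref (n : nat) (w : n.-tuple 'I_p) (j : nat) (x : X) : X :=
  foldl (fun y i => g i y) x (take j w).

Definition dword (n : nat) (w : n.-tuple 'I_p) (x y : X) : R :=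
  \big[Num.max/0]_(j < n.+1) mdist (wpref w j x) (wpref w j y).

Definition separated (K : set X) n (w : n.-tuple 'I_p) (eps : R) (E : seq X) :=
  [/\ uniq E, {subset E <= K} &
      forall x y, x \in E -> y \in E -> x != y -> eps < dword w x y].

Definition spanning (K : set X) n (w : n.-tuple 'I_p) (eps : R) (E : seq X) :=
  [/\ uniq E, {subset E <= K} &
      forall y, K y -> exists2 x, x \in E & dword w x y <= eps].

Definition s_sep (K : set X) n (w : n.-tuple 'I_p) (eps : R) : R :=
  sup [set (size E)%:R | E in separated K w eps].

Definition b_span (K : set X) n (w : n.-tuple 'I_p) (eps : R) : R :=
  inf [set (size E)%:R | E in spanning K w eps].

Local Open Scope ereal_scope.

Definition growth (F : forall n, n.-tuple 'I_p -> R) : \bar R :=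
  limn_esup (fun n : nat =>
    ((n%:R)^-1 * ln ((p%:R ^- n) * \sum_(w : n.-tuple 'I_p) F n w))%R%:E).

Definition htopK (K : set X) : \bar R :=
  lim ((fun eps : R => growth (fun n w => s_sep K w eps)) @ 0^'+).

Definition Bd (K : set X) (eps : R) : \bar R :=
  growth (fun n w => b_span K w eps).

Definition hd (x : X) (eps : R) : \bar R :=
  ereal_inf [set Bd K eps | K in [set K : set X | compact K /\ nbhs x K]].

Definition htopx (x : X) : \bar R := lim (hd x @ 0^'+).

End FreeSemigroupEntropy.

From Pilot Require Import Defs.
From HB Require Import structures.
From mathcomp Require Import all_boot all_order all_algebra.
From mathcomp Require Import all_classical all_reals all_analysis.
Set Implicit Arguments. Unset Strict Implicit. Unset Printing Implicit Defensive.
Import Order.TTheory GRing.Theory Num.Theory.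
Local Open Scope classical_set_scope.
Local Open Scope ring_scope.

(* (i) If x0 is the only limit point of the closed set K, every neighbourhood
   U of x0 contains all but finitely many points F of K, hence
   s(K, w, 2e) <= b(U, w, e) + #F <= (1 + #F) b(U, w, e).  A constant factor
   does not change an exponential growth rate, so h(K, 2e) <= B_d(U, e) for
   every compact neighbourhood U of x0, and h_top(K) <= h_top(x0).
   (ii) The separation growth of the ball U_k of radius 1/(k+1) about x0 at
   scale 1/(j+1) dominates h_d(x0, 1/(j+1)) (a maximal separated set spans),
   and up to any error it is attained at arbitrarily late times by a finite
   subset of U_k.  The union K of such finite sets over all j <= k, together
   with x0 and points z_k -> x0, is countable and closed with x0 as its only
   limit point, and h_top(K) >= h_top(x0); (i) gives the converse. *)

(** * Topological and metric preliminaries *)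

(* [compact_cover] is stated for pointed spaces; a point of [T] makes a copy
   of [T] pointed. *)
Definition pointed_at (T : topologicalType) (x : T) : Type := T.
HB.instance Definition _ (T : topologicalType) (x : T) :=
  Topological.copy (@pointed_at T x) T.
HB.instance Definition _ (T : topologicalType) (x : T) :=
  isPointed.Build (@pointed_at T x) x.

Lemma compact_cover_at (T : topologicalType) (x : T) (A : set T) :
  compact A -> cover_compact A.
Proof.
by move=> cA; have : @compact (pointed_at x) A := cA; rewrite compact_cover.
Qed.

Lemma finite_cover_of_isolated (T : topologicalType) (K C : set T) :
  compact C -> C `<=` K ->
  (forall y, C y -> exists2 V, nbhs y V & K `&` V `<=` [set y]) ->
  exists F : seq T, C `<=` [set x | x \in F].
Proof.
move=> cC CK isoC; have [[c Cc]|C0] := pselect (C !=set0); last first.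
  by exists [::] => y Cy; exfalso; apply: C0; exists y.
have [V hV] : {V : T -> set T &
    forall y, C y -> nbhs y (V y) /\ K `&` V y `<=` [set y]}.
  apply: (@choice _ _ (fun y W => C y -> nbhs y W /\ K `&` W `<=` [set y])).
  move=> y; have [Cy|nCy] := pselect (C y); last by exists setT.
  by have [W nW KW] := isoC y Cy; exists W.
case: (compact_cover_at c cC (D := C) (f := fun y => interior (V y))).
- by move=> y _; exact: open_interior.
- by move=> y Cy; exists y => //; case: (hV y Cy).
move=> D DC CD; exists (finmap.enum_fset D) => k Ck.
have [y /= yD Vk] := CD k Ck.
have [_ KVy] : nbhs y (V y) /\ K `&` V y `<=` [set y].
  by apply: hV; have := DC y yD; rewrite in_setE.
by rewrite (KVy k) //; split; [exact: CK|exact: interior_subset].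
Qed.

Lemma closed_unique_limit_point_cofinite (T : topologicalType) (K : set T)
    (x0 : T) :
  compact [set: T] -> closed K -> (forall y, limit_point K y -> y = x0) ->
  forall U, nbhs x0 U -> exists F : seq T, K `<=` U `|` [set x | x \in F].
Proof.
move=> cT clK limK U nU.
have cC : compact (K `&` ~` U°).
  apply: (subclosed_compact _ cT) => //; apply: closedI => //.
  by rewrite closedC; exact: open_interior.
have [|F CF] := finite_cover_of_isolated cC (@subIsetl _ _ _).
  move=> y [_ nUy]; have : ~ limit_point K y.
    by move=> /limK yx0; apply: nUy; rewrite yx0.
  by rewrite not_limit_pointE.
exists F => k Kk; have [Uk|nUk] := pselect (U° k).
  by left; exact: interior_subset.
by right; exact: CF.
Qed.

Lemma lee_EFin_lt (R : realType) (h s : \bar R) :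
  (forall r : R, (r%:E < h)%E -> (r%:E <= s)%E) -> (h <= s)%E.
Proof.
case: h => [h| |] hs; last by rewrite leNye.
- apply/lee_subgt0Pr => e e0; rewrite -EFinB; apply: hs.
  by rewrite lte_fin ltrBlDr ltrDl.
- case: s hs => [s| |] hs; last by have := hs 0 (ltry _).
  + by have := hs (s + 1) (ltry _); rewrite lee_fin leNgt ltrDl ltr01.
  + by rewrite leey.
Qed.

Lemma ereal_approx_below (R : realType) (h : \bar R) : (-oo < h)%E ->
  exists u : nat -> R, (forall k, ((u k)%:E < h)%E) /\
    forall r, (r%:E < h)%E -> \forall k \near \oo, r <= u k.
Proof.
case: h => [h| |] // _.
- exists (fun k => h - k.+1%:R^-1); split => [k|r].
    by rewrite lte_fin ltrBlDr ltrDl invr_gt0.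
  rewrite lte_fin -subr_gt0 => hr.
  apply: filterS (near_infty_natSinv_lt (PosNum hr)) => k /= /ltW.
  by rewrite lerBrDr addrC -lerBrDr.
- exists (fun k => k%:R); split => [k|r _]; first exact: ltry.
  by apply: filterS (nbhs_infty_gtr r) => k /ltW.
Qed.

Lemma lim_at_right0_nonincreasing (R : realType) (f : R -> \bar R) :
  (forall x y, 0 < x -> x <= y -> (f y <= f x)%E) ->
  lim (f @ 0^'+) = ereal_sup (f @` [set e | 0 < e]).
Proof.
move=> hf.
have : f x @[x --> 0^'+] -->
    ereal_sup (f @` [set` Interval (BRight 0) (BInfty R false)]).
  apply: nonincreasing_at_right_cvge => // x y.
  by rewrite !in_itv /= !andbT => x0 _; exact: hf.
move=> fl; rewrite (cvg_lim _ fl) //; congr (ereal_sup (f @` _)).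
by apply/seteqP; split => x /=; rewrite in_itv /= andbT.
Qed.

Section MetricFacts.
Variables (R : realType) (X : metricType R).

Lemma nbhs_mdist_lt (x y : X) e :
  mdist x y < e -> nbhs y [set z | mdist x z < e].
Proof.
move=> xy; apply/nbhs_ballP; exists (e - mdist x y).
  by rewrite /= subr_gt0.
move=> z; rewrite ballEmdist /= => yz.
by apply: le_lt_trans (metric_triangle x y z) _; rewrite -ltrBrDl.
Qed.

Lemma closed_mdist_le (x : X) r : closed [set y | mdist x y <= r].
Proof.
move=> y cly /=; rewrite leNgt; apply/negP => ry.
have [z [/= zr yz]] :
    [set y | mdist x y <= r] `&` [set z | mdist y z < mdist x y - r] !=set0.
  by apply: cly; apply: nbhs_mdist_lt; rewrite mdistxx subr_gt0.
have : mdist x y < r + (mdist x y - r).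
  apply: le_lt_trans (metric_triangle x z y) _.
  by apply: ler_ltD => //; rewrite metric_sym.
by rewrite addrC subrK ltxx.
Qed.

Lemma nbhs_mdist_le (x : X) r : 0 < r -> nbhs x [set y | mdist x y <= r].
Proof.
move=> r0; apply/nbhs_ballP; exists r => // y.
by rewrite ballEmdist /=; exact: ltW.
Qed.

Lemma seq_mdist_away (s : seq X) (y : X) : exists2 d : R, 0 < d &
  forall z, z \in s -> z != y -> d <= mdist y z.
Proof.
elim: s => [|a s [d d0 hd]]; first by exists 1.
have [->|ay] := eqVneq a y.
  by exists d => // z; rewrite inE => /orP[/eqP ->|]; [rewrite eqxx|exact: hd].
exists (Num.min d (mdist y a)); first by rewrite lt_min d0 mdist_gt0 eq_sym ay.
move=> z; rewrite inE => /orP[/eqP ->|zs zy]; first by rewrite ge_min lexx orbT.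
by rewrite ge_min hd.
Qed.

End MetricFacts.

Definition union_seqs (T : eqType) (F : nat -> seq T) : set T :=
  \bigcup_(k in [set: nat]) [set x | x \in F k].

Lemma union_seqs_countable (T : eqType) (F : nat -> seq T) :
  countable (union_seqs F).
Proof.
apply: bigcup_countable; first exact: countableP.
by move=> k _; apply: finite_set_countable; exact: finite_seq.
Qed.

Section ShrinkingFiniteSets.
Variables (R : realType) (X : metricType R) (x0 : X) (F : nat -> seq X).
Hypothesis F_shrink : forall k x, x \in F k -> mdist x0 x <= k.+1%:R^-1.

Lemma union_seqs_isolated y : y != x0 -> exists2 d, 0 < d &
  forall w, union_seqs F w -> mdist y w < d -> w = y.
Proof.
move=> yx0; set r := mdist x0 y.
have r20 : 0 < r / 2 by rewrite divr_gt0 // mdist_gt0 eq_sym.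
have [N _ hN] := near_infty_natSinv_lt (PosNum r20).
have [d d0 hd] := seq_mdist_away (flatten [seq F k | k <- iota 0 N]) y.
exists (Num.min (r / 2) d); first by rewrite lt_min r20 d0.
move=> w [k _ wF]; rewrite lt_min => /andP[yw1 yw2].
have [Nk|kN] := leqP N k.
  have : r < r / 2 + r / 2.
    apply: le_lt_trans (metric_triangle x0 w y) _; rewrite (metric_sym w y).
    by apply: ltrD => //; exact: le_lt_trans (F_shrink wF) (hN _ Nk).
  by rewrite -splitr ltxx.
apply/eqP; apply: contraT => wy.
have wS : w \in flatten [seq F k | k <- iota 0 N].
  by apply/flatten_mapP; exists k => //; rewrite mem_iota.
by have := hd w wS wy; rewrite leNgt yw2.
Qed.

Lemma union_seqs_limit_point y : limit_point (union_seqs F) y -> y = x0.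
Proof.
move=> lpy; apply/eqP; apply: contraT => yx0.
have [d d0 hd] := union_seqs_isolated yx0.
have [w [wy Kw]] := lpy _ (nbhsx_ballx y _ d0).
by rewrite ballEmdist /= => /(hd w Kw) wE; move: wy; rewrite wE eqxx.
Qed.

Lemma closed_union_seqs : union_seqs F x0 -> closed (union_seqs F).
Proof.
move=> Kx0 y cly; apply: contrapT => nKy.
have yx0 : y != x0 by apply/eqP => yE; apply: nKy; rewrite yE.
have [d d0 hd] := union_seqs_isolated yx0.
have [w [Kw]] := cly _ (nbhsx_ballx y _ d0).
by rewrite ballEmdist /= => /(hd w Kw) wE; apply: nKy; rewrite -wE.
Qed.

Lemma union_seqs_limit_point_center :
  (forall k, exists2 z, z \in F k & z != x0) -> limit_point (union_seqs F) x0.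
Proof.
move=> Fz V /nbhs_ballP [e e0 eV].
have [k _ hk] := near_infty_natSinv_lt (PosNum e0).
have [z zF zx0] := Fz k.
exists z; split => //; first by exists k.
apply: eV; rewrite ballEmdist /=.
exact: le_lt_trans (F_shrink zF) (hk _ (leqnn k)).
Qed.

End ShrinkingFiniteSets.

Section FreeSemigroupEntropyTheory.
Variables (R : realType) (X : metricType R) (p : nat) (g : 'I_p -> X -> X).
Hypothesis p_gt0 : (0 < p)%N.
Hypothesis g_cont : forall i, continuous (g i).
Hypothesis X_compact : compact [set: X].

(** * Bowen metrics, separated and spanning sets *)

Lemma wpref_continuous n (w : n.-tuple 'I_p) j : continuous (wpref g w j).
Proof.
rewrite /wpref; elim: (take j w) => [|i s IH] x /=; first exact: cvg_id.
by have := continuous_comp (@g_cont i x) (IH (g i x)).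
Qed.

Lemma dword_ge0 n (w : n.-tuple 'I_p) x y : 0 <= dword g w x y.
Proof. exact: bigmax_ge_id. Qed.

Lemma dwordxx n (w : n.-tuple 'I_p) x : dword g w x x = 0.
Proof.
apply/eqP; rewrite eq_le dword_ge0 andbT.
by apply: bigmax_le => // j; rewrite mdistxx.
Qed.

Lemma dwordC n (w : n.-tuple 'I_p) x y : dword g w x y = dword g w y x.
Proof. by apply: eq_bigr => j _; rewrite metric_sym. Qed.

Lemma dword_triangle n (w : n.-tuple 'I_p) x y z :
  dword g w x z <= dword g w x y + dword g w y z.
Proof.
apply: bigmax_le => [|j _]; first by rewrite addr_ge0 ?dword_ge0.
apply: le_trans (metric_triangle _ (wpref g w j y) _) _.
by apply: lerD; exact: le_bigmax.
Qed.

Lemma open_dword_lt n (w : n.-tuple 'I_p) x e :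
  open [set y | dword g w x y < e].
Proof.
rewrite openE => y /= xy.
have : forall j : 'I_n.+1,
    \forall z \near y, mdist (wpref g w j x) (wpref g w j z) < e.
  move=> j; have : mdist (wpref g w j x) (wpref g w j y) < e.
    by apply: le_lt_trans xy; exact: le_bigmax.
  by move=> /nbhs_mdist_lt /(@wpref_continuous _ w j y).
move=> /filter_forall; apply: filterS => z hz /=.
by apply: bigmax_lt => //; exact: le_lt_trans (dword_ge0 w x y) xy.
Qed.

Lemma separated_size_le_cover n (w : n.-tuple 'I_p) (A : set X) (E S : seq X)
    c e :
  Defs.separated g A w c E ->
  (forall y, A y -> exists2 z, z \in S & dword g w z y <= e) ->
  e + e <= c -> (size E <= size S)%N.
Proof.
move=> [uE EA sepE] cov ec.
have [f hf] : {f : X -> X &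
    forall x, x \in E -> f x \in S /\ dword g w (f x) x <= e}.
  apply: (@choice _ _ (fun x z => x \in E -> z \in S /\ dword g w z x <= e)).
  move=> x; have [xE|xE] := boolP (x \in E); last by exists x.
  have := EA x xE; rewrite in_setE => /cov[z zS hz].
  by exists z.
rewrite -(size_map f); apply: uniq_leq_size; last first.
  by move=> _ /mapP[x xE ->]; case: (hf x xE).
rewrite map_inj_in_uniq // => x y xE yE fxy; apply/eqP/negPn/negP => xy.
have := sepE x y xE yE xy; rewrite ltNge => /negP; apply.
apply: le_trans (dword_triangle w x (f x) y) _; rewrite dwordC.
apply: le_trans ec; apply: lerD; first by case: (hf x xE).
by rewrite fxy; case: (hf y yE).
Qed.

Lemma spanning_exists n (w : n.-tuple 'I_p) (A : set X) e :
  compact A -> 0 < e -> exists S, spanning g A w e S.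
Proof.
move=> cA e0; have [[a Aa]|A0] := pselect (A !=set0); last first.
  by exists [::]; split => // y Ay; exfalso; apply: A0; exists y.
case: (compact_cover_at a cA (D := A)
  (f := fun x => [set y | dword g w x y < e])).
- by move=> x _; exact: open_dword_lt.
- by move=> y Ay; exists y => //=; rewrite dwordxx.
move=> D DA AD; exists (finmap.enum_fset D); split.
- exact: finmap.fset_uniq.
- by move=> x /DA.
- by move=> y /AD [x /= xD hx]; exists x => //; exact: ltW.
Qed.

Lemma separated_size_bounded n (w : n.-tuple 'I_p) e : 0 < e ->
  exists M, forall (A : set X) E, Defs.separated g A w e E -> (size E <= M)%N.
Proof.
move=> e0; have e20 : 0 < e / 2 by rewrite divr_gt0.
have [S [_ _ spanS]] := spanning_exists w X_compact e20.
exists (size S) => A E sepE.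
apply: (separated_size_le_cover sepE) => [y _|]; first exact: spanS.
by rewrite -splitr.
Qed.

Lemma s_sep_attained n (w : n.-tuple 'I_p) (A : set X) e : 0 < e -> exists E,
  [/\ Defs.separated g A w e E,
      forall E', Defs.separated g A w e E' -> (size E' <= size E)%N
    & s_sep g A w e = (size E)%:R].
Proof.
move=> e0; have [M hM] := separated_size_bounded w e0.
pose P : pred nat :=
  fun m => `[< exists E, Defs.separated g A w e E /\ size E = m >].
have exP : exists i, P i.
  by exists 0%N; apply/asboolP; exists [::]; split => //; split.
have ubP i : P i -> (i <= M)%N by move=> /asboolP[E [sepE <-]]; exact: hM sepE.
have [m /asboolP[E [sepE <-]] maxE] := ex_maxnP exP ubP.
have maxE' E' : Defs.separated g A w e E' -> (size E' <= size E)%N.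
  by move=> sepE'; apply: maxE; apply/asboolP; exists E'.
exists E; split => //; apply/eqP; rewrite eq_le; apply/andP; split.
  apply: ge_sup; first by exists (size E)%:R; exists E.
  by move=> _ [E' sepE' <-]; rewrite ler_nat; exact: maxE'.
apply: ub_le_sup; last by exists E.
by exists (size E)%:R => _ [E' sepE' <-]; rewrite ler_nat; exact: maxE'.
Qed.

Lemma b_span_attained n (w : n.-tuple 'I_p) (A : set X) e :
  compact A -> 0 < e -> exists E,
  [/\ spanning g A w e E,
      forall E', spanning g A w e E' -> (size E <= size E')%N
    & b_span g A w e = (size E)%:R].
Proof.
move=> cA e0.
pose P : pred nat := fun m => `[< exists E, spanning g A w e E /\ size E = m >].
have exP : exists i, P i.
  have [S spanS] := spanning_exists w cA e0.
  by exists (size S); apply/asboolP; exists S.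
have [m /asboolP[E [spanE <-]] minE] := ex_minnP exP.
have minE' E' : spanning g A w e E' -> (size E <= size E')%N.
  by move=> spanE'; apply: minE; apply/asboolP; exists E'.
exists E; split => //; apply/eqP; rewrite eq_le; apply/andP; split; last first.
  apply: lb_le_inf; first by exists (size E)%:R; exists E.
  by move=> _ [E' spanE' <-]; rewrite ler_nat; exact: minE'.
apply: ge_inf; last by exists E.
by exists 0 => _ [E' _ <-]; rewrite ler0n.
Qed.

Lemma s_sepS n (w : n.-tuple 'I_p) (A B : set X) e : 0 < e -> A `<=` B ->
  s_sep g A w e <= s_sep g B w e.
Proof.
move=> e0 AB.
have [E [[uE EA sepE] _ ->]] := s_sep_attained w A e0.
have [E' [_ maxE' ->]] := s_sep_attained w B e0.
rewrite ler_nat; apply: maxE'; split => // x /EA.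
by rewrite !in_setE; exact: AB.
Qed.

Lemma s_sep_le_eps n (w : n.-tuple 'I_p) (A : set X) e1 e2 :
  0 < e1 -> e1 <= e2 -> s_sep g A w e2 <= s_sep g A w e1.
Proof.
move=> e10 e12; have e20 := lt_le_trans e10 e12.
have [E [[uE EA sepE] _ ->]] := s_sep_attained w A e20.
have [E' [_ maxE' ->]] := s_sep_attained w A e10.
rewrite ler_nat; apply: maxE'; split => // x y xE yE xy.
exact: le_lt_trans e12 (sepE x y xE yE xy).
Qed.

Lemma b_span_le_eps n (w : n.-tuple 'I_p) (A : set X) e1 e2 :
  compact A -> 0 < e1 -> e1 <= e2 -> b_span g A w e2 <= b_span g A w e1.
Proof.
move=> cA e10 e12; have e20 := lt_le_trans e10 e12.
have [E [[uE EA spanE] _ ->]] := b_span_attained w cA e10.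
have [E' [_ minE' ->]] := b_span_attained w cA e20.
rewrite ler_nat; apply: minE'; split => // y Ay.
by have [x xE hx] := spanE y Ay; exists x => //; exact: le_trans e12.
Qed.

Lemma s_sep_set0 n (w : n.-tuple 'I_p) (A : set X) e :
  0 < e -> ~ (A !=set0) -> s_sep g A w e = 0.
Proof.
move=> e0 A0; have [E [[_ EA _] _ ->]] := s_sep_attained w A e0.
case: E EA => [//|x E] /(_ x); rewrite inE eqxx in_setE => /(_ isT) Ax.
by exfalso; apply: A0; exists x.
Qed.

Lemma s_sep_ge1 n (w : n.-tuple 'I_p) (A : set X) e :
  0 < e -> A !=set0 -> 1 <= s_sep g A w e.
Proof.
move=> e0 [a Aa]; have [E [_ maxE ->]] := s_sep_attained w A e0.
rewrite ler1n; apply: (@leq_trans (size [:: a])) => //.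
apply: maxE; split => //.
- by move=> x; rewrite inE => /eqP ->; rewrite in_setE.
- by move=> x y; rewrite !inE => /eqP -> /eqP ->; rewrite eqxx.
Qed.

Lemma b_span_ge1 n (w : n.-tuple 'I_p) (A : set X) e :
  compact A -> 0 < e -> A !=set0 -> 1 <= b_span g A w e.
Proof.
move=> cA e0 [a Aa]; have [E [[_ _ spanE] _ ->]] := b_span_attained w cA e0.
by have [x xE _] := spanE a Aa; rewrite ler1n; case: E xE {spanE}.
Qed.

(* A maximal separated set is spanning: a point far from all of it could be
   added to it. *)
Lemma b_span_le_s_sep n (w : n.-tuple 'I_p) (A : set X) e :
  compact A -> 0 < e -> b_span g A w e <= s_sep g A w e.
Proof.
move=> cA e0.
have [E [[uE EA sepE] maxE ->]] := s_sep_attained w A e0.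
have [E' [_ minE' ->]] := b_span_attained w cA e0.
rewrite ler_nat; apply: minE'; split => // y Ay.
apply: contrapT => farE.
have far x : x \in E -> e < dword g w x y.
  by move=> xE; rewrite ltNge; apply/negP => xy; apply: farE; exists x.
have yE : y \notin E by apply/negP => /far; rewrite dwordxx ltNge (ltW e0).
have : (size (y :: E) <= size E)%N.
  apply: maxE; split; first by rewrite /= yE.
    by move=> x; rewrite inE => /orP[/eqP ->|/EA]; rewrite ?in_setE.
  move=> x z; rewrite !inE => /orP[/eqP ->|xE] /orP[/eqP ->|zE].
  - by rewrite eqxx.
  - by move=> _; rewrite dwordC; exact: far.
  - by move=> _; exact: far.
  - exact: sepE.
by rewrite /= ltnn.
Qed.

Lemma s_sep_le_b_span_add n (w : n.-tuple 'I_p) (K U : set X) (F : seq X) e :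
  compact U -> 0 < e -> K `<=` U `|` [set x | x \in F] ->
  s_sep g K w (e + e) <= b_span g U w e + (size F)%:R.
Proof.
move=> cU e0 KUF.
have [E [[uE EK sepE] _ ->]] := s_sep_attained w K (addr_gt0 e0 e0).
have [S [[_ _ spanS] _ ->]] := b_span_attained w cU e0.
pose inU := fun x => `[< U x >].
rewrite -natrD ler_nat -(count_predC inU E) -!size_filter leq_add //.
- apply: (separated_size_le_cover (A := U) (c := e + e) (e := e)) => //.
    split; first exact: filter_uniq.
      by move=> x; rewrite mem_filter => /andP[/asboolP]; rewrite in_setE.
    by move=> x y; rewrite !mem_filter => /andP[_ xE] /andP[_ yE]; exact: sepE.
  by move=> y Uy; exact: spanS.
- apply: uniq_leq_size; first exact: filter_uniq.
  move=> x; rewrite mem_filter => /andP[/asboolPn nUx xE].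
  by have := EK x xE; rewrite in_setE => /KUF[].
Qed.

(** * Exponential growth rates *)

Definition growth_term (F : forall n, n.-tuple 'I_p -> R) (n : nat) : R :=
  n%:R^-1 * ln (p%:R ^- n * \sum_(w : n.-tuple 'I_p) F n w).

Lemma growthE F : growth F = limn_esup (fun n => (growth_term F n)%:E).
Proof. by []. Qed.

Lemma avg_ge1 n (G : n.-tuple 'I_p -> R) :
  (forall w, 1 <= G w) -> 1 <= p%:R ^- n * \sum_(w : n.-tuple 'I_p) G w.
Proof.
move=> G1; have pn0 : 0 < p%:R ^+ n :> R by rewrite exprn_gt0 // ltr0n.
rewrite -[X in X <= _](mulVf (lt0r_neq0 pn0)).
apply: ler_wpM2l; first by rewrite invr_ge0 ltW.
have -> : p%:R ^+ n = \sum_(w : n.-tuple 'I_p) (1 : R).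
  by rewrite sumr_const card_tuple card_ord natrX.
by apply: ler_sum => w _; exact: G1.
Qed.

Lemma growth_term_le_mul (F G : forall n, n.-tuple 'I_p -> R) c n :
  (forall w, F n w <= c * G n w) -> 1 <= c -> (forall w, 1 <= G n w) ->
  growth_term F n <= n%:R^-1 * ln c + growth_term G n.
Proof.
move=> FG c1 G1; rewrite /growth_term -mulrDr ler_wpM2l ?invr_ge0 //.
set a := _ * \sum_w F n w; set b := _ * \sum_w G n w.
have b1 : 1 <= b by exact: avg_ge1.
have [a0|a0] := leP a 0; first by rewrite ln0 // addr_ge0 // ln_ge0.
have ab : a <= c * b.
  rewrite /a /b mulrCA ler_wpM2l ?invr_ge0 ?exprn_ge0 // mulr_sumr.
  by apply: ler_sum => w _; exact: FG.
have c0 : 0 < c by apply: lt_le_trans c1.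
have b0 : 0 < b by apply: lt_le_trans b1.
by rewrite -lnM ?posrE // ler_ln ?posrE // mulr_gt0.
Qed.

Lemma le_growth_term (F G : forall n, n.-tuple 'I_p -> R) n :
  (forall w, F n w <= G n w) -> (forall w, 1 <= G n w) ->
  growth_term F n <= growth_term G n.
Proof.
move=> FG G1; have := @growth_term_le_mul F G 1 n.
by rewrite ln1 mulr0 add0r; apply => // w; rewrite mul1r.
Qed.

Lemma le_growth_often (r : \bar R) F :
  (forall N, exists2 n, (N <= n)%N & (r <= (growth_term F n)%:E)%E) ->
  (r <= growth F)%E.
Proof.
move=> rF; rewrite growthE /limn_esup limf_esupE.
apply: le_ereal_inf_tmp => _ [V [N _ NV] <-].
have [n Nn rn] := rF N; apply: le_trans rn _; apply: ereal_sup_ubound.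
by exists n => //; exact: NV.
Qed.

Lemma growth_le_near (r : \bar R) F :
  (\forall n \near \oo, ((growth_term F n)%:E <= r)%E) -> (growth F <= r)%E.
Proof.
move=> [N _ Fr]; rewrite growthE /limn_esup limf_esupE.
apply: ge_ereal_inf.
exists (ereal_sup ((fun n => (growth_term F n)%:E) @` [set n | (N <= n)%N])).
  by exists [set n | (N <= n)%N] => //; exists N.
by apply: ge_ereal_sup => _ [n /= Nn <-]; exact: Fr.
Qed.

Lemma lt_growth_often (r : R) F : (r%:E < growth F)%E ->
  forall N, exists2 n, (N <= n)%N & r <= growth_term F n.
Proof.
move=> rF N; apply: contrapT => noN.
suff : (growth F <= r%:E)%E by rewrite leNgt rF.
apply: growth_le_near; exists N => // n /= Nn; rewrite lee_fin ltW //.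
by rewrite ltNge; apply/negP => rn; apply: noN; exists n.
Qed.

Lemma growth_ge0 (G : forall n, n.-tuple 'I_p -> R) :
  (forall n w, 1 <= G n w) -> (0 <= growth G)%E.
Proof.
move=> G1; apply: le_growth_often => N; exists N => //.
by rewrite lee_fin mulr_ge0 ?invr_ge0 // ln_ge0 // avg_ge1.
Qed.

(* The factor [c] only adds [ln c / n] to the [n]-th term, which vanishes. *)
Lemma growth_le_mul (F G : forall n, n.-tuple 'I_p -> R) c :
  (forall n w, F n w <= c * G n w) -> 1 <= c -> (forall n w, 1 <= G n w) ->
  (growth F <= growth G)%E.
Proof.
move=> FG c1 G1; rewrite [X in (_ <= X)%E]growthE /limn_esup limf_esupE.
apply: le_ereal_inf_tmp => _ [V [N _ NV] <-].
apply/lee_addgt0Pr => e e0.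
have lc0 : 0 <= ln c / e by rewrite divr_ge0 // ?ln_ge0 // ltW.
apply: growth_le_near; exists (maxn N (Num.bound (ln c / e)).+1) => // n.
rewrite /= geq_max => /andP[Nn Mn].
apply: le_trans (_ : ((n%:R)^-1 * ln c + growth_term G n)%:E <= _)%E.
  by rewrite lee_fin; apply: growth_term_le_mul => // w; exact: FG.
rewrite EFinD addeC; apply: leeD.
  by apply: ereal_sup_ubound; exists n => //; exact: NV.
have n0 : 0 < n%:R :> R by rewrite ltr0n; exact: leq_trans Mn.
have lcn : ln c / e <= n%:R.
  apply/ltW/(lt_le_trans (archi_boundP lc0)).
  by rewrite ler_nat; exact: ltnW.
by rewrite lee_fin mulrC ler_pdivrMr // mulrC -ler_pdivrMr.
Qed.

(** * Entropy of sets and at points *)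

Definition sep_entropy (A : set X) (e : R) : \bar R :=
  growth (fun n w => s_sep g A w e).

Lemma sep_entropy_nonincreasing (A : set X) e1 e2 :
  0 < e1 -> e1 <= e2 -> (sep_entropy A e2 <= sep_entropy A e1)%E.
Proof.
move=> e10 e12; have e20 := lt_le_trans e10 e12.
have [A0|A0] := pselect (A !=set0).
  apply: (@growth_le_mul _ _ 1) => // n w; last exact: s_sep_ge1.
  by rewrite mul1r; exact: s_sep_le_eps.
rewrite /sep_entropy.
suff -> : (fun n (w : n.-tuple 'I_p) => s_sep g A w e2) =
    (fun n (w : n.-tuple 'I_p) => s_sep g A w e1) by [].
apply: functional_extensionality_dep => n; apply: funext => w.
by rewrite !s_sep_set0.
Qed.

Lemma Bd_nonincreasing (K : set X) e1 e2 : compact K -> K !=set0 ->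
  0 < e1 -> e1 <= e2 -> (Bd g K e2 <= Bd g K e1)%E.
Proof.
move=> cK K0 e10 e12; have e20 := lt_le_trans e10 e12.
apply: (@growth_le_mul _ _ 1) => // n w; last exact: b_span_ge1.
by rewrite mul1r; exact: b_span_le_eps.
Qed.

Lemma hd_nonincreasing (x : X) e1 e2 :
  0 < e1 -> e1 <= e2 -> (hd g x e2 <= hd g x e1)%E.
Proof.
move=> e10 e12; apply: le_ereal_inf_tmp => _ [K [cK xK] <-].
apply: ge_ereal_inf; exists (Bd g K e2); first by exists K.
by apply: Bd_nonincreasing => //; exists x; exact: nbhs_singleton.
Qed.

Lemma htopK_supE (A : set X) :
  htopK g A = ereal_sup (sep_entropy A @` [set e | 0 < e]).
Proof. exact: lim_at_right0_nonincreasing (@sep_entropy_nonincreasing A). Qed.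

Lemma htopx_supE (x : X) : htopx g x = ereal_sup (hd g x @` [set e | 0 < e]).
Proof. exact: lim_at_right0_nonincreasing (@hd_nonincreasing x). Qed.

Lemma hd_ge0 (x : X) e : 0 < e -> (0 <= hd g x e)%E.
Proof.
move=> e0; apply: le_ereal_inf_tmp => _ [K [cK xK] <-].
apply: growth_ge0 => n w; apply: b_span_ge1 => //.
by exists x; exact: nbhs_singleton.
Qed.

Lemma hd_le_sep_entropy (x : X) (A : set X) e : 0 < e ->
  compact A -> nbhs x A -> (hd g x e <= sep_entropy A e)%E.
Proof.
move=> e0 cA xA; apply: ge_ereal_inf; exists (Bd g A e); first by exists A.
apply: (@growth_le_mul _ _ 1) => // n w; last first.
  by apply: s_sep_ge1 => //; exists x; exact: nbhs_singleton.
by rewrite mul1r; exact: b_span_le_s_sep.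
Qed.

Lemma htopK_le_htopx_cofinite (K : set X) (x0 : X) :
  (forall U, nbhs x0 U -> exists F : seq X, K `<=` U `|` [set x | x \in F]) ->
  (htopK g K <= htopx g x0)%E.
Proof.
move=> KU; rewrite htopK_supE htopx_supE; apply: ge_ereal_sup => _ [e e0 <-].
have e20 : 0 < e / 2 by rewrite divr_gt0.
apply: (@le_trans _ _ (hd g x0 (e / 2))); last first.
  by apply: ereal_sup_ubound; exists (e / 2).
apply: le_ereal_inf_tmp => _ [U [cU xU] <-].
have [F KUF] := KU U xU.
have U0 : U !=set0 by exists x0; exact: nbhs_singleton.
apply: (@growth_le_mul _ _ (1 + (size F)%:R)) => [n w||n w].
- rewrite {1}(splitr e); apply: le_trans (s_sep_le_b_span_add w cU e20 KUF) _.
  have b1 := b_span_ge1 w cU e20 U0.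
  by rewrite mulrDl mul1r lerD2l ler_peMr.
- by rewrite lerDl.
- exact: b_span_ge1.
Qed.

(* At each time the separated sets of all words form one finite witness. *)
Lemma finite_separated_witness (A : set X) e r N : A !=set0 -> 0 < e ->
  (r%:E < sep_entropy A e)%E -> exists F : seq X, {subset F <= A} /\
  exists2 n, (N <= n)%N &
    r <= growth_term (fun n w => s_sep g [set x | x \in F] w e) n.
Proof.
move=> A0 e0 /lt_growth_often/(_ N)[n Nn rn].
have [E hE] : {E : n.-tuple 'I_p -> seq X & forall w,
    Defs.separated g A w e (E w) /\ s_sep g A w e = (size (E w))%:R}.
  apply: (@choice _ _ (fun w E => Defs.separated g A w e E /\
     s_sep g A w e = (size E)%:R)) => w.
  by have [E [sepE _ sE]] := s_sep_attained w A e0; exists E.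
pose F := flatten [seq E w | w <- index_enum (n.-tuple 'I_p)].
have EF w : {subset E w <= F}.
  by move=> x xE; apply/flatten_mapP; exists w => //; exact: mem_index_enum.
exists F; split.
  by move=> x /flatten_mapP[w _ xE]; have [[_ EA _] _] := hE w; exact: EA.
have sAF (w : n.-tuple 'I_p) : s_sep g A w e <= s_sep g [set x | x \in F] w e.
  have [[uE _ sepE] ->] := hE w.
  have [E' [_ maxE' ->]] := s_sep_attained w [set x | x \in F] e0.
  rewrite ler_nat; apply: maxE'; split => // x xE.
  by rewrite in_setE; exact: EF xE.
exists n => //; apply: le_trans rn (le_growth_term _ _) => w; first exact: sAF.
by apply: le_trans (sAF w); exact: s_sep_ge1.
Qed.

Lemma le_sep_entropy_witness (K : set X) e (h : \bar R) (u : nat -> R)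
    (F : nat -> seq X) :
  0 < e -> K !=set0 ->
  (forall r, (r%:E < h)%E -> \forall k \near \oo, r <= u k) ->
  (\forall k \near \oo, {subset F k <= K}) ->
  (forall k, exists2 n, (k <= n)%N &
    u k <= growth_term (fun n w => s_sep g [set x | x \in F k] w e) n) ->
  (h <= sep_entropy K e)%E.
Proof.
move=> e0 K0 uh FK Fu; apply: lee_EFin_lt => r /uh ru.
apply: le_growth_often => N.
have [k [Nk ruk FKk]] : exists k, [/\ (N <= k)%N, r <= u k & {subset F k <= K}].
  have : \forall k \near \oo, [/\ (N <= k)%N, r <= u k & {subset F k <= K}].
    near=> k; split.
    - by near: k; exists N.
    - by near: k; exact: ru.
    - by near: k; exact: FK.
  by move=> [M _ hM]; exists M; apply: hM => /=.
have [n kn hn] := Fu k; exists n; first exact: leq_trans Nk kn.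
rewrite lee_fin; apply: le_trans ruk (le_trans hn (le_growth_term _ _)) => w.
  by apply: s_sepS => // x /= /FKk; rewrite in_setE.
exact: s_sep_ge1.
Unshelve. all: by end_near. Qed.

Section EntropyAtPoint.
Variable x0 : X.

Let r k : R := k.+1%:R^-1.

Let r_gt0 k : 0 < r k. Proof. by rewrite invr_gt0 ltr0n. Qed.

Let U k := [set y | mdist x0 y <= r k].

Let U_nonempty k : U k !=set0.
Proof. by exists x0; rewrite /U /= mdistxx ltW. Qed.

Let hd_le_sep_entropy_U k e : 0 < e -> (hd g x0 e <= sep_entropy (U k) e)%E.
Proof.
move=> e0; apply: hd_le_sep_entropy => //; last exact: nbhs_mdist_le.
by apply: (subclosed_compact _ X_compact) => //; exact: closed_mdist_le.
Qed.

Let near_point k : exists z, mdist x0 z <= r k /\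
  (limit_point [set: X] x0 -> z != x0).
Proof.
have [lp|nlp] := pselect (limit_point [set: X] x0); last first.
  by exists x0; rewrite mdistxx ltW.
have [z [zx0 _]] := lp _ (nbhsx_ballx x0 _ (r_gt0 k)).
by rewrite ballEmdist /= => xz; exists z; split => //; exact: ltW.
Qed.

Lemma htopx_countable_closed : exists K : set X,
  [/\ countable K, closed K, K x0, (forall y, limit_point K y -> y = x0) &
     (limit_point [set: X] x0 -> limit_point K x0)] /\ htopx g x0 = htopK g K.
Proof.
have [u hu] := choice (fun j => ereal_approx_below
  (lt_le_trans (ltNyr 0) (hd_ge0 x0 (r_gt0 j)))).
have [W hW] := choice (fun kj : nat * nat =>
  finite_separated_witness kj.1 (U_nonempty kj.1) (r_gt0 kj.2)
    (lt_le_trans ((hu kj.2).1 kj.1) (hd_le_sep_entropy_U kj.1 (r_gt0 kj.2)))).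
have [z hz] := choice near_point.
pose T k : seq X := x0 :: z k :: flatten [seq W (k, j) | j <- iota 0 k.+1].
have T_shrink k x : x \in T k -> mdist x0 x <= r k.
  rewrite !inE => /orP[/eqP ->|/orP[/eqP ->|/flatten_mapP[j _ xW]]].
  - by rewrite mdistxx ltW.
  - exact: (hz k).1.
  - by have [WU _] := hW (k, j); have := WU x xW; rewrite in_setE.
have Kx0 : union_seqs T x0 by exists 0%N => //; rewrite /= inE eqxx.
have clK := closed_union_seqs T_shrink Kx0.
have limK := union_seqs_limit_point T_shrink.
exists (union_seqs T); split; first split => //.
- exact: union_seqs_countable.
- move=> lp; apply: (union_seqs_limit_point_center T_shrink) => k.
  by exists (z k); [rewrite !inE eqxx orbT|exact: (hz k).2].
apply/eqP; rewrite eq_le; apply/andP; split; last first.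
  by apply: htopK_le_htopx_cofinite; exact: closed_unique_limit_point_cofinite.
rewrite htopx_supE htopK_supE; apply: ge_ereal_sup => _ [e e0 <-].
have [j _ hj] := near_infty_natSinv_lt (PosNum e0).
apply: le_trans (hd_nonincreasing x0 (r_gt0 j) (ltW (hj j (leqnn j)))) _.
apply: (@le_trans _ _ (sep_entropy (union_seqs T) (r j))).
  apply: (le_sep_entropy_witness (u := u j) (F := fun k => W (k, j))) => //.
  - by exists x0.
  - exact: (hu j).2.
  - exists j => // k /= jk x xW; rewrite in_setE; exists k => //=.
    by rewrite !inE; apply/orP; right; apply/orP; right; apply/flatten_mapP;
      exists j => //; rewrite mem_iota ltnS.
  - by move=> k; exact: (hW (k, j)).2.
by apply: ereal_sup_ubound; exists (r j); first exact: r_gt0.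
Qed.

End EntropyAtPoint.

End FreeSemigroupEntropyTheory.

Theorem mainTheorem10 (R : realType) (X : metricType R) (p : nat)
  (g : 'I_p -> X -> X) :
  (0 < p)%N ->
  compact [set: X] ->
  (forall i, continuous (g i)) ->
  (forall (K : set X) (x0 : X),
      countable K -> closed K ->
      limit_point K x0 -> (forall y, limit_point K y -> y = x0) ->
      (htopK g K <= htopx g x0)%E) /\
  (forall x0 : X, exists K : set X,
      [/\ countable K, closed K, K x0,
          (forall y, limit_point K y -> y = x0) &
          (limit_point [set: X] x0 -> limit_point K x0)] /\
      htopx g x0 = htopK g K).
Proof.
move=> p_gt0 X_compact g_cont; split => [K x0 _ clK _ limK|x0].
  apply: htopK_le_htopx_cofinite => //.
  exact: closed_unique_limit_point_cofinite.
exact: htopx_countable_closed.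
Qed.
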